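(* Let $G$ be a finite group and $p$ a fixed prime divisor of $|G|$. Then every self-centralizing non-abelian subgroup of $G$ is a TI-subgroup of $G$ or subnormal in $G$ or has $p'$-order if and only if every non-abelian subgroup of $G$ is a TI-subgroup of $G$ or subnormal in $G$ or has $p'$-order.
   Context: All groups are finite. A subgroup $H$ of a group $G$ is a TI-subgroup of $G$ if for every $g\in G$, $H^g\cap H=1$ or $H^g\cap H=H$. A subgroup $H$ of $G$ is self-centralizing in $G$ if $C_G(H)\leq H$. A subgroup has $p'$-order if its order is not divisible by $p$. *)

From mathcomp Require Import all_boot all_fingroup all_solvable.
Set Implicit Arguments. Unset Strict Implicit. Unset Printing Implicit Defensive.
Local Open Scope group_scope.

Definition TI_subgroup (gT : finGroupType) (H G : {set gT}) : Prop :=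
  forall g, g \in G -> (H :^ g :&: H = 1) \/ (H :^ g :&: H = H).

Definition self_centralizing (gT : finGroupType) (H G : {set gT}) : bool :=
  'C_G(H) \subset H.

Definition TI_sn_pprime (gT : finGroupType) (p : nat) (H G : {set gT}) : Prop :=
  TI_subgroup H G \/ H <|<| G \/ ~~ (p %| #|H|).

From mathcomp Require Import all_boot all_fingroup all_solvable.
From mathcomp Require Import zmodp mxrepresentation mxabelem vcharacter.
From mathcomp Require Import zify.
Set Implicit Arguments. Unset Strict Implicit. Unset Printing Implicit Defensive.
Local Open Scope group_scope.

(* Only the forward implication needs proof, by downward induction on |H|.
   Let H be non-abelian, of order divisible by p and not subnormal in G, so
   that every proper overgroup of H is TI or subnormal.  If C_G(H) is not
   contained in H, pick a q-element c in C_G(H) \ H and put L = H<c>, which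
   is then TI.  A maximal M among the subgroups of G containing L in which H is
   subnormal is proper, self-normalizing and TI, hence a Frobenius complement, so the
   abelian subgroups of L are cyclic.  If H^g meets H nontrivially, then
   L^g = L; the q'-part of an element of H lies in H^g by coprimality, and its
   q-part lies in H^g because c and c^g generate the same subgroup of the
   cyclic group <x>Z(L).  Hence H^g = H. *)

Section TIFrobenius.

Variable gT : finGroupType.
Implicit Types G H K L M A B E : {group gT}.
Implicit Types x y z c g : gT.

Lemma abelian_fixpoint_free_cyclic s A E :
  s.-abelem E -> E :!=: 1 -> A \subset 'N(E) -> abelian A ->
  {in A^#, forall a, 'C_E[a] = 1} -> cyclic A.
Proof.
move=> abelE ntE nEA cAA regA.
pose normedNT := fun K : {group gT} => (K :!=: 1) && (A \subset 'N(K)).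
have [K minK sKE] := @mingroup_exists _ normedNT E (introT andP (conj ntE nEA)).
have /andP[ntK nKA] := mingroupp minK.
have abelK : s.-abelem K := abelemS sKE abelE.
have faithK : 'C_A(K) = 1.
  apply/trivgP/subsetP=> a /setIP[Aa cKa]; apply/set1P/eqP; apply: contraNT ntK.
  move=> nta; rewrite -subG1 -(regA a); last by rewrite !inE nta.
  by rewrite subsetI sKE sub_cent1.
have minnK : minnormal K A by [].
exact: mx_faithful_irr_abelian_cyclic (abelem_mx_faithful abelK ntK nKA faithK)
  (abelem_mx_irrP abelK ntK nKA minnK) cAA.
Qed.

(* By coprime action A normalizes a Sylow subgroup P of the Frobenius kernel,
   and acts fixed-point-freely on the elementary abelian group Omega_1(Z(P)). *)
Lemma Frobenius_compl_abelian_cyclic G M A :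
  [Frobenius G with complement M] -> A \subset M -> abelian A -> cyclic A.
Proof.
move=> frobG sAM cAA; have [K frobK] := Frobenius_kernel_exists frobG.
have [defG ntK _ _ _] := Frobenius_context frobK.
have [nsKG sMG _ _ _] := sdprod_context defG.
have nKA : A \subset 'N(K) := subset_trans (subset_trans sAM sMG) (normal_norm nsKG).
have coKA : coprime #|K| #|A| := coprime_dvdr (cardSg sAM) (Frobenius_coprime frobK).
have [P sylP nPA] := sol_coprime_Sylow_exists (pdiv #|K|) (abelian_sol cAA) nKA coKA.
have pP := pHall_pgroup sylP.
have ntP : P :!=: 1.
  by rewrite -cardG_gt1 (card_Hall sylP) p_part_gt1 pi_pdiv cardG_gt1.
have pZ : (pdiv #|K|).-group 'Z(P) := pgroupS (center_sub P) pP.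
have chE : 'Ohm_1('Z(P)) \char P := char_trans (Ohm_char 1 _) (center_char P).
apply: (abelian_fixpoint_free_cyclic (Ohm1_abelem pZ (center_abelian P)) _ _ cAA).
- by rewrite Ohm1_eq1 center_nil_eq1 ?(pgroup_nil pP).
- exact: char_norm_trans chE nPA.
move=> a /setD1P[nta Aa]; apply/trivgP.
rewrite -(Frobenius_reg_ker frobK (_ : a \in M^#)); last by rewrite !inE nta (subsetP sAM).
by apply/setSI/(subset_trans (char_sub chE))/(pHall_sub sylP).
Qed.

Lemma TI_conjg_eq G H g :
  TI_subgroup H G -> g \in G -> H :^ g :&: H != 1 -> H :^ g = H.
Proof.
move=> tiH Gg; case: (tiH g Gg) => [-> | eqH _]; first by rewrite eqxx.
have sHHg : H \subset H :^ g by rewrite -{1}eqH subsetIl.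
by apply/eqP; rewrite eq_sym eqEcard sHHg cardJg leqnn.
Qed.

Lemma TI_self_normalizing_Frobenius G M :
  M \subset G -> M :!=: G -> M :!=: 1 -> TI_subgroup M G -> 'N_G(M) = M ->
  [Frobenius G with complement M].
Proof.
move=> sMG neMG ntM tiM nMM; apply/andP; split=> //; apply/normedTI_P.
split; first by rewrite setD_eq0 subG1.
  by rewrite normD1 subsetI sMG normG.
move=> g Gg /pred0Pn[y /andP[]]; rewrite conjD1g !inE => /andP[nty My] /andP[_ Mgy].
have ntMgM : M :^ g :&: M != 1 by apply/trivgPn; exists y; rewrite ?inE ?Mgy.
by rewrite -nMM inE Gg; apply/normP/(TI_conjg_eq tiM).
Qed.

Lemma exists_constt_notin H x : x \notin H -> exists q : nat, x.`_q \notin H.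
Proof.
move=> Hx; have [allH | ] := boolP [forall q : 'I_#[x].+1, x.`_q \in H].
  case/negP: Hx; rewrite -(prod_constt x) big_mkord.
  by apply: group_prod => q _; apply: (forallP allH q).
by rewrite negb_forall => /existsP[q Hq]; exists q.
Qed.

Lemma mem_mul_cycle_coprime K y z :
  y \in K * <[z]> -> z \in 'C(K) -> coprime #[y] #[z] -> y \in K.
Proof.
case/mulsgP=> k zi Kk zi_z def_y cKz coyz.
have cKzi : zi \in 'C(K) by apply: subsetP zi_z; rewrite cycle_subG.
have Kyz : y ^+ #[z] \in K.
  have czk : commute k zi by apply/commute_sym/(centP cKzi).
  by rewrite def_y expgMn // (expg_cardG zi_z) mulg1 groupX.
have /eqP def_yz : generator <[y]> (y ^+ #[z]) by rewrite generator_coprime.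
by rewrite -cycle_subG def_yz cycle_subG.
Qed.

Lemma cyclic_pelt_cycle_total (q : nat) B x y :
  cyclic B -> x \in B -> y \in B -> q.-elt x -> q.-elt y ->
  (<[x]> \subset <[y]>) || (<[y]> \subset <[x]>).
Proof.
move=> cycB Bx By /p_natP[a qa] /p_natP[b qb].
have sxB : <[x]> \subset B by rewrite cycle_subG.
have syB : <[y]> \subset B by rewrite cycle_subG.
rewrite -(cardSg_cyclic cycB sxB syB) -(cardSg_cyclic cycB syB sxB) -!/(order _) qa qb.
by case: (leqP a b) => [lab | /ltnW lba]; apply/orP; [left | right]; apply: dvdn_exp2l.
Qed.

(* The q'-part of an element of H lies in H^g because c^g centralizes H^g and
   L = H^g<c^g>; for the q-part x, the cyclic group <x>Z(L) contains both <c>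
   and <c^g>, which therefore coincide. *)
Lemma conj_central_join_eq (q : nat) H c g :
  c \in 'C(H) -> q.-elt c ->
  (forall A, A \subset H <*> <[c]> -> abelian A -> cyclic A) ->
  (H <*> <[c]>) :^ g = H <*> <[c]> -> H :^ g = H.
Proof.
set L := H <*> <[c]> => cHc qc cycL LgL.
have [Hc | nHc] := boolP (c \in H).
  by move: LgL; rewrite /L (joing_idPl _) ?cycle_subG.
have Lc : c \in L := subsetP (joing_subr _ _) c (cycle_id c).
have cLc : c \in 'C(L) by rewrite centY inE cHc cent_cycle cent1id.
have ZLc : c \in 'Z(L) by rewrite inE Lc.
have ZLcg : c ^ g \in 'Z(L) by rewrite inE -{1 2}LgL centJ !memJ_conjg Lc.
have defL : L = H :^ g * <[c ^ g]>.
  rewrite cycleJ -conjsMg -norm_joinEr ?LgL // cycle_subG.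
  exact: subsetP (cent_sub H) c cHc.
suff sHHg : H \subset H :^ g by apply/eqP; rewrite eq_sym eqEcard sHHg cardJg leqnn.
apply/subsetP=> x0 Hx0; rewrite -(consttC q x0); apply: groupM.
- set x := x0.`_q.
  have Hx : x \in H by apply: subsetP (cycle_constt q x0); rewrite cycle_subG.
  pose B := (<[x]> <*> 'Z(L))%G.
  have sBL : B \subset L.
    by rewrite join_subG cycle_subG (subsetP (joing_subl _ _)) ?center_sub.
  have cycB : cyclic B.
    apply: (cycL _ sBL); rewrite abelianY cycle_abelian center_abelian centsC.
    have cZL : L \subset 'C('Z(L)) by rewrite centsC subsetIr.
    by rewrite /= cycle_subG (subsetP cZL) // (subsetP (joing_subl _ _)).
  have Bc : c \in B by rewrite mem_gen // inE ZLc orbT.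
  have Bcg : c ^ g \in B by rewrite mem_gen // inE ZLcg orbT.
  have Bx : x \in B by rewrite mem_gen // inE cycle_id.
  have eq_ccg : <[c ^ g]> = <[c]>.
    by apply/eqP; rewrite (eq_subG_cyclic cycB) ?cycle_subG // -!/(order _) orderJ.
  have eq_cHg : <[c]> :&: H :^ g = <[c]> :&: H.
    apply/eqP; rewrite (eq_subG_cyclic (cycle_cyclic c)) ?subsetIl //.
    by rewrite /= -{1}eq_ccg cycleJ -conjIg cardJg.
  case/orP: (cyclic_pelt_cycle_total cycB Bx Bc (p_elt_constt q x0) qc) => [sxc | scx].
    by have /setIP[] : x \in <[c]> :&: H :^ g by rewrite eq_cHg inE Hx (subsetP sxc) ?cycle_id.
  by case/negP: nHc; apply: subsetP (cycle_id c); apply: subset_trans scx _; rewrite cycle_subG.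
- apply: (@mem_mul_cycle_coprime _ _ (c ^ g)).
  + by rewrite -defL (subsetP (joing_subl _ _)) ?groupX.
  + by rewrite centJ memJ_conjg.
  by rewrite orderJ (p'nat_coprime (p_elt_constt _ _) qc).
Qed.

Lemma self_normalizing_subnormal_overgroup G H L :
  L \subset G -> H <|<| L -> ~~ (H <|<| G) ->
  exists2 M : {group gT}, L \subset M & [/\ M \subset G, H <|<| M, M :!=: G & 'N_G(M) = M].
Proof.
move=> sLG snHL snHG.
pose snOver := fun M : {group gT} => (M \subset G) && (H <|<| M).
have [M maxM sLM] := @maxgroup_exists _ snOver L (introT andP (conj sLG snHL)).
have [/andP[sMG snHM] maxP] := maxgroupP maxM.
exists M => //; split=> //; first by apply: contraNneq snHG => <-.
apply: maxP; last by rewrite subsetI sMG normG.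
by rewrite /snOver subsetIl (subnormal_trans snHM) ?normal_subnormal ?normal_subnorm.
Qed.

Lemma TI_of_not_self_centralizing G H :
  H \subset G -> ~~ (H <|<| G) ->
  (forall L, H \proper L -> L \subset G -> TI_subgroup L G \/ L <|<| G) ->
  ~~ self_centralizing H G -> TI_subgroup H G.
Proof.
move=> sHG snHG overTI /subsetPn[c0 /setIP[Gc0 cHc0] Hc0].
have [q Hc] := exists_constt_notin Hc0; set c := c0.`_q in Hc.
have c_c0 : <[c]> \subset <[c0]> by rewrite cycle_subG cycle_constt.
have cHc : c \in 'C(H) by rewrite -cycle_subG (subset_trans c_c0) ?cycle_subG.
set L := (H <*> <[c]>)%G.
have nsHL : H <| L.
  by rewrite /normal joing_subl join_subG normG cycle_subG (subsetP (cent_sub H)).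
have Lc : c \in L := subsetP (joing_subr _ _) c (cycle_id c).
have pHL : H \proper L by rewrite properEneq joing_subl andbT; apply: contraNneq Hc => ->.
have sLG : L \subset G by rewrite join_subG sHG (subset_trans c_c0) ?cycle_subG.
have overTI_sn K : H \proper K -> K \subset G -> H <|<| K -> TI_subgroup K G.
  move=> pHK sKG snHK; case: (overTI K pHK sKG) => // snKG.
  by rewrite (subnormal_trans snHK snKG) in snHG.
have snHL := normal_subnormal nsHL.
have tiL := overTI_sn L pHL sLG snHL.
have [M sLM [sMG snHM neMG nMM]] := self_normalizing_subnormal_overgroup sLG snHL snHG.
have tiM := overTI_sn M (proper_sub_trans pHL sLM) sMG snHM.
have ntM : M :!=: 1.
  by apply/trivgPn; exists c; [apply: subsetP sLM c Lc | apply: contraNneq Hc => ->].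
have frobM := TI_self_normalizing_Frobenius sMG neMG ntM tiM nMM.
have cycL A : A \subset L -> abelian A -> cyclic A.
  by move=> sAL; apply: Frobenius_compl_abelian_cyclic frobM (subset_trans sAL sLM).
move=> g Gg; have [-> | ntHgH] := eqVneq (H :^ g :&: H) 1; [by left | right].
have ntLgL : L :^ g :&: L != 1.
  by apply: contraNneq ntHgH => LgL1; rewrite -subG1 -LgL1 setISS ?conjSg ?joing_subl.
by rewrite (conj_central_join_eq cHc (p_elt_constt q c0) cycL (TI_conjg_eq tiL Gg ntLgL)) setIid.
Qed.

Lemma TI_sn_pprime_of_self_centralizing G p :
  (forall H, H \subset G -> ~~ abelian H -> self_centralizing H G ->
     TI_sn_pprime p H G) ->
  forall H, H \subset G -> ~~ abelian H -> TI_sn_pprime p H G.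
Proof.
move=> scTI H; have [n] := ubnP (#|G| - #|H|); elim: n H => // n IHn H ltGHn sHG nabH.
have [pH | ] := boolP (p %| #|H|); last by right; right.
have [snHG | snHG] := boolP (H <|<| G); first by right; left.
have [scH | nscH] := boolP (self_centralizing H G); first exact: scTI.
left; apply: TI_of_not_self_centralizing sHG snHG _ nscH => L pHL sLG.
have ltGLn : #|G| - #|L| < n by have := proper_card pHL; have := subset_leq_card sLG; lia.
have nabL : ~~ abelian L := contra (abelianS (proper_sub pHL)) nabH.
case: (IHn L ltGLn sLG nabL) => [|[]]; [by left | by right |].
by rewrite (dvdn_trans pH (cardSg (proper_sub pHL))).
Qed.

End TIFrobenius.

Theorem theorem1p7 (gT : finGroupType) (G : {group gT}) (p : nat) :
  prime p -> p %| #|G| ->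
  ((forall H : {group gT}, H \subset G -> ~~ abelian H ->
      self_centralizing H G -> TI_sn_pprime p H G)
   <->
   (forall H : {group gT}, H \subset G -> ~~ abelian H ->
      TI_sn_pprime p H G)).
Proof.
move=> _ _; split; first exact: TI_sn_pprime_of_self_centralizing.
by move=> TI_all H sHG nabH _; apply: TI_all.
Qed.
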